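(* Consider the decentralized setting of the context. Assume the maximum delay is bounded by $\tau$ and that all loss functions $f^i_t$ are $G$-Lipschitz with respect to $\|\cdot\|$. For any $p\in\mathcal X$ with $h(p)\le r^2$, running D-DDA with constant stepsize \[\eta^i_t\equiv\eta=\frac{r}{G\bar M\sqrt{(2\tau+1)T}}\] guarantees, for any choice of reference indices $j_t\in\{1,\dots,M_t\}$, \[R^{g}_T(p)\le 2rG\bar M\sqrt{(2\tau+1)T}=O(\bar M\sqrt{\tau T}).\]
   Context: Let $\mathcal V$ be a finite-dimensional real vector space with norm $\|\cdot\|$ and dual norm $\|\cdot\|_*$, and $\mathcal X\subset\mathcal V$ closed convex. A regularizer $h:\mathcal V\to\mathbb R\cup\{+\infty\}$ is lower semicontinuous, $1$-strongly convex w.r.t. $\|\cdot\|$ on $\mathcal X$, with $\mathcal X\subset\operatorname{dom}h$, whose subdifferential admits a continuous selection, and $h\ge0$. Decentralized protocol: at each time $t=1,\dots,T$, $M_t\ge1$ agents are active, labelled $1,\dots,M_t$; agent $i$ plays $x^i_t\in\mathcal X$ against a convex loss $f^i_t$ (with $\mathcal X\subset\operatorname{dom}\partial f^i_t$) and the subgradient $g^i_t\in\partial f^i_t(x^i_t)$ is later shared. $\mathcal S^i_t\subset\{(j,s):1\le s\le t-1,\ 1\le j\le M_s\}$ is the set of (agent, time) indices of the feedback available for playing $x^i_t$. D-DDA: $x^i_t=\arg\min_{x\in\mathcal X}\{\sum_{(j,s)\in\mathcal S^i_t}\langle g^j_s,x\rangle+h(x)/\eta^i_t\}$. Maximum delay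 bounded by $\tau$: for all $t$, $i$, every $s\le t-\tau-1$ and $j\le M_s$, $(j,s)\in\mathcal S^i_t$. $\bar M=\sqrt{\frac1T\sum_{t=1}^TM_t^2}$. Collective regret with reference agents $j_t$: $R^{g}_T(p)=\sum_{t=1}^T\sum_{i=1}^{M_t}f^i_t(x^{j_t}_t)-\sum_{t=1}^T\sum_{i=1}^{M_t}f^i_t(p)$. *)

From HB Require Import structures.
From mathcomp Require Import all_boot all_order all_algebra.
From mathcomp Require Import all_classical all_reals all_analysis.
Set Implicit Arguments. Unset Strict Implicit. Unset Printing Implicit Defensive.
Import Order.TTheory GRing.Theory Num.Theory.
Import numFieldNormedType.Exports.
Local Open Scope ring_scope.
Local Open Scope classical_set_scope.

(* The finite-dimensional real vector space V is modelled as 'rV[R]_n; its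
   dual is identified with 'rV[R]_n via the standard pairing [dot]. *)
Definition dot {R : realType} {n : nat} (u v : 'rV[R]_n) : R :=
  \sum_(k < n) u ord0 k * v ord0 k.

Definition is_norm {R : realType} {n : nat} (nrm : 'rV[R]_n -> R) : Prop :=
  [/\ forall x y, nrm (x + y) <= nrm x + nrm y,
      forall (a : R) x, nrm (a *: x) = `|a| * nrm x
    & forall x, nrm x = 0 -> x = 0].

Definition strongly_convex_on {R : realType} {n : nat} (nrm : 'rV[R]_n -> R)
  (X : set 'rV[R]_n) (h : 'rV[R]_n -> \bar R) : Prop :=
  forall x y (l : R), X x -> X y -> 0 <= l <= 1 ->
    (h (l *: x + (1 - l) *: y)%R <=
     (l%:E * h x + (1 - l)%:E * h y - (l * (1 - l) / 2 * nrm (x - y) ^+ 2)%:E))%E.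

Definition ext_subgrad {R : realType} {n : nat} (h : 'rV[R]_n -> \bar R)
  (x v : 'rV[R]_n) : Prop :=
  h x \is a fin_num /\ forall y, (h x + (dot v (y - x))%:E <= h y)%E.

Definition subdiff_cont_selection {R : realType} {n : nat}
  (h : 'rV[R]_n -> \bar R) : Prop :=
  exists s : 'rV[R]_n -> 'rV[R]_n,
    (forall x, (exists v, ext_subgrad h x v) -> ext_subgrad h x (s x)) /\
    {within [set x | exists v, ext_subgrad h x v], continuous s}.

Definition convex_fun {R : realType} {n : nat} (f : 'rV[R]_n -> R) : Prop :=
  forall x y (l : R), 0 <= l <= 1 ->
    f (l *: x + (1 - l) *: y) <= l * f x + (1 - l) * f y.

Definition lipschitz_wrt {R : realType} {n : nat} (nrm : 'rV[R]_n -> R)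
  (G : R) (f : 'rV[R]_n -> R) : Prop :=
  forall x y, `|f x - f y| <= G * nrm (x - y).

Definition subgrad {R : realType} {n : nat} (f : 'rV[R]_n -> R)
  (x g : 'rV[R]_n) : Prop :=
  forall y, f x + dot g (y - x) <= f y.

(* sum of the feedback available to agent i at time t:
   \sum_{(j,s) in S^i_t} g^j_s   (S t i is a predicate on pairs (j,s)) *)
Definition cum_feedback {R : realType} {n : nat} (M : nat -> nat)
  (g : nat -> nat -> 'rV[R]_n) (S : nat -> nat -> pred (nat * nat))
  (t i : nat) : 'rV[R]_n :=
  \sum_(1 <= s < t) \sum_(1 <= j < (M s).+1 | S t i (j, s)) g s j.

Definition Mbar {R : realType} (M : nat -> nat) (T : nat) : R :=
  Num.sqrt ((T%:R)^-1 * \sum_(1 <= t < T.+1) ((M t)%:R) ^+ 2).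

From HB Require Import structures.
From mathcomp Require Import all_boot all_order all_algebra.
From mathcomp Require Import all_classical all_reals all_analysis.
From mathcomp Require Import ring lra zify.
Import Order.TTheory GRing.Theory Num.Theory.
Import numFieldNormedType.Exports.

(* Compare the agents with the full-information leaders: y_t is an eps-minimizer of
   <L_t, y> + h(y)/eta, where L_t sums all gradients of the rounds before t.  By strong
   convexity, eps-minimizers of two such objectives whose linear parts differ by a
   functional of dual norm K are within eta K + d of each other, with d^2 ~ eta eps.
   With delay at most tau, the feedback of any agent at round t misses at most the
   P_t gradients of the last tau rounds, so x^i_t, x^(j_t)_t and y_t are within
   eta G P_t + d of each other.  Lipschitz continuity turns this into an overhead of
   eta G^2 (M_t^2 + 2 M_t P_t) per round, the be-the-leader lemma bounds the regret of
   the y_(t+1) by r^2/eta, and AM-GM gives sum_t M_t P_t <= tau sum_t M_t^2.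
   Balancing eta and letting eps -> 0 yields the bound. *)

Set Implicit Arguments. Unset Strict Implicit. Unset Printing Implicit Defensive.

Definition delayed_mass (M : nat -> nat) (tau t : nat) : nat :=
  \sum_(1 <= s < t | t <= s + tau) M s.

Lemma sum_window_count (a b lo tau : nat) (P : pred nat) :
  (forall k, a <= k < b -> P k -> lo <= k < lo + tau) ->
  \sum_(a <= k < b | P k) 1 <= tau.
Proof.
move=> inW; rewrite sum1_count -size_filter.
rewrite -[X in _ <= X](size_iota lo) -[X in iota _ X](addKn lo).
apply: uniq_leq_size; first by rewrite filter_uniq ?iota_uniq.
by move=> k; rewrite mem_filter !mem_index_iota => /andP[/inW + /[dup] /andP[]].
Qed.

Lemma sum_mul_delayed_mass_le (M : nat -> nat) (tau T : nat) :
  \sum_(1 <= t < T.+1) M t * delayed_mass M tau t <=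
  tau * \sum_(1 <= t < T.+1) M t ^ 2.
Proof.
set W := fun t s => (s < t) && (t <= s + tau).
have Cauchy : 2 * \sum_(1 <= t < T.+1) M t * delayed_mass M tau t <=
    \sum_(1 <= t < T.+1) M t ^ 2 * \sum_(1 <= s < t | t <= s + tau) 1 +
    \sum_(1 <= t < T.+1) \sum_(1 <= s < T.+1 | W t s) M s ^ 2.
  rewrite -big_split big_distrr /= big_nat_cond [X in _ <= X]big_nat_cond.
  apply: leq_sum => t /andP[/andP[_ tT] _].
  have widen F : \sum_(1 <= s < t | t <= s + tau) F s =
      \sum_(1 <= s < T.+1 | W t s) F s.
    by rewrite (big_nat_widen _ _ T.+1) 1?ltnW //; apply: eq_bigl => s; rewrite andbC.
  rewrite /delayed_mass !widen !big_distrr -big_split /=.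
  rewrite [X in _ <= X]big_mkcond /= big_mkcond /=; apply: leq_sum => s _.
  by case: ifP => // _; rewrite muln1; exact: nat_Cauchy.
have rows : \sum_(1 <= t < T.+1) M t ^ 2 * \sum_(1 <= s < t | t <= s + tau) 1 <=
    tau * \sum_(1 <= t < T.+1) M t ^ 2.
  rewrite big_distrr /=; apply: leq_sum => t _; rewrite mulnC; apply: leq_mul => //.
  apply: (@sum_window_count _ _ (t - tau)) => s; lia.
have cols : \sum_(1 <= t < T.+1) \sum_(1 <= s < T.+1 | W t s) M s ^ 2 <=
    tau * \sum_(1 <= t < T.+1) M t ^ 2.
  under eq_bigr do rewrite big_mkcond /=.
  rewrite exchange_big_nat /= big_distrr /=; apply: leq_sum => s _.
  rewrite -big_mkcond /= -(muln1 (M s ^ 2)) -big_distrr /= muln1 mulnC.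
  rewrite leq_mul2r; apply/orP; right.
  by apply: (@sum_window_count _ _ s.+1) => t; rewrite /W; lia.
rewrite -(leq_pmul2l (isT : 0 < 2)); apply: leq_trans Cauchy _.
by rewrite mul2n -addnn; exact: leq_add rows cols.
Qed.

Local Open Scope ring_scope.
Local Open Scope classical_set_scope.

Section Dot.
Variables (R : realType) (n : nat).
Implicit Types u v w : 'rV[R]_n.

Lemma dotDl u v w : dot (u + v) w = dot u w + dot v w.
Proof. by rewrite /dot -big_split; apply: eq_bigr => k _; rewrite mxE mulrDl. Qed.

Lemma dotDr u v w : dot w (u + v) = dot w u + dot w v.
Proof. by rewrite /dot -big_split; apply: eq_bigr => k _; rewrite mxE mulrDr. Qed.

Lemma dotZl a u w : dot (a *: u) w = a * dot u w.
Proof. by rewrite /dot mulr_sumr; apply: eq_bigr => k _; rewrite mxE mulrA. Qed.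

Lemma dotZr a u w : dot w (a *: u) = a * dot w u.
Proof. by rewrite /dot mulr_sumr; apply: eq_bigr => k _; rewrite mxE mulrCA. Qed.

Lemma dot0l w : dot 0 w = 0.
Proof. by rewrite -(scale0r 0) dotZl mul0r. Qed.

Lemma dotBl u v w : dot (u - v) w = dot u w - dot v w.
Proof. by rewrite dotDl -scaleN1r dotZl mulN1r. Qed.

Lemma dotNr u w : dot w (- u) = - dot w u.
Proof. by rewrite -scaleN1r dotZr mulN1r. Qed.

Lemma dotBr u v w : dot w (u - v) = dot w u - dot w v.
Proof. by rewrite dotDr dotNr. Qed.

Lemma dot_suml (I : Type) (r : seq I) (P : pred I) (F : I -> 'rV[R]_n) w :
  dot (\sum_(i <- r | P i) F i) w = \sum_(i <- r | P i) dot (F i) w.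
Proof. exact: (big_morph (dot^~ w) (fun u v => dotDl u v w) (dot0l w)). Qed.

End Dot.

Section Norm.
Variables (R : realType) (n : nat) (nrm : 'rV[R]_n -> R).
Hypothesis nrm_norm : is_norm nrm.

Lemma nrm0 : nrm 0 = 0.
Proof. by case: nrm_norm => _ nrmZ _; rewrite -(scale0r 0) nrmZ normr0 mul0r. Qed.

Lemma nrmN v : nrm (- v) = nrm v.
Proof. by case: nrm_norm => _ nrmZ _; rewrite -scaleN1r nrmZ normrN normr1 mul1r. Qed.

Lemma nrmB v w : nrm (v - w) = nrm (w - v).
Proof. by rewrite -nrmN opprB. Qed.

Lemma nrm_ge0 v : 0 <= nrm v.
Proof.
have [nrmD _ _] := nrm_norm.
by have := nrmD v (- v); rewrite subrr nrm0 nrmN; lra.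
Qed.

End Norm.

Lemma lipschitz_subgrad_dot_le (R : realType) (n : nat) (nrm : 'rV[R]_n -> R)
    (G : R) (f : 'rV[R]_n -> R) (x g v : 'rV[R]_n) :
  is_norm nrm -> lipschitz_wrt nrm G f -> subgrad f x g -> `|dot g v| <= G * nrm v.
Proof.
move=> nrm_norm lip sg; rewrite ler_norml; apply/andP; split.
- have := sg (x - v); have := lip (x - v) x.
  rewrite addrAC subrr add0r dotNr nrmN //.
  by move=> /ler_normlP[]; lra.
- have := sg (x + v); have := lip (x + v) x.
  by rewrite addrAC subrr add0r => /ler_normlP[]; lra.
Qed.

Definition dda_obj {R : realType} {n : nat} (h : 'rV[R]_n -> \bar R) (eta : R)
    (A y : 'rV[R]_n) : R :=
  dot A y + fine (h y) / eta.

Definition eps_argmin {R : realType} {n : nat} (X : set 'rV[R]_n)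
    (F : 'rV[R]_n -> R) (e : R) (w : 'rV[R]_n) : Prop :=
  X w /\ forall z, X z -> F w <= F z + e.

Lemma eps_argminW (R : realType) (n : nat) (X : set 'rV[R]_n) F (e e' : R) w :
  e <= e' -> eps_argmin X F e w -> eps_argmin X F e' w.
Proof.
move=> ee' [Xw wmin]; split=> // z Xz.
by apply: le_trans (wmin z Xz) _; rewrite lerD2l.
Qed.

Lemma le_of_quadratic_growth (R : realType) (a c d D : R) :
  0 <= a -> 0 < d -> 4 * c <= d ^+ 2 -> 0 <= D ->
  (forall l, 0 <= l <= 1 -> l * (1 - l) * D ^+ 2 - c <= l * a * D) ->
  D <= a + d.
Proof.
move=> a_ge0 d_gt0 cd D_ge0 growth.
set B := a + d; have B_gt0 : 0 < B by rewrite /B; lra.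
set l := d / (2 * B).
have lB : l * B = d / 2 by rewrite /l; field; rewrite gt_eqF.
have l_gt0 : 0 < l by rewrite /l divr_gt0 // mulr_gt0.
have l_le_half : l <= 1 / 2.
  by rewrite /B in lB B_gt0 *; nra.
(* [D > B] is impossible: [l D ((1 - l) D - a)] increases with [D] and is [d^2/4 >= c] at [B]. *)
rewrite leNgt; apply/negP => BD.
have l01 : 0 <= l <= 1 by apply/andP; split; lra.
have := growth l l01.
have gap : 0 < l * ((D - B) * ((1 - l) * (D + B) - a)).
  have DB : B <= (1 - l) * (D + B) by nra.
  by rewrite mulr_gt0 // mulr_gt0 ?subr_gt0 //; rewrite /B in DB *; lra.
have at_B : l * B * ((1 - l) * B - a) = d ^+ 2 / 4.
  by rewrite lB mulrBl lB /B; field.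
nra.
Qed.

Lemma convex_set_combine (R : realType) (n : nat) (X : set 'rV[R]_n) x y (l : R) :
  convex_set (X : set (convex_lmodType _)) -> X x -> X y -> 0 <= l <= 1 ->
  X (l *: x + (1 - l) *: y).
Proof.
move=> X_convex Xx Xy /andP[l_ge0 l_le1].
by have := X_convex x y (Itv01 l_ge0 l_le1); rewrite !inE => /(_ Xx Xy).
Qed.

Section RegularizedObjective.
Variables (R : realType) (n : nat) (nrm : 'rV[R]_n -> R) (X : set 'rV[R]_n).
Variables (h : 'rV[R]_n -> \bar R) (eta : R).
Hypotheses (nrm_norm : is_norm nrm) (X_convex : convex_set (X : set (convex_lmodType _))).
Hypotheses (h_sc : strongly_convex_on nrm X h) (h_fin : forall y, X y -> h y \is a fin_num).
Hypothesis eta_gt0 : 0 < eta.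

Local Notation F := (dda_obj h eta).

Lemma fine_strongly_convex x y l : X x -> X y -> 0 <= l <= 1 ->
  fine (h (l *: x + (1 - l) *: y)) <=
  l * fine (h x) + (1 - l) * fine (h y) - l * (1 - l) / 2 * nrm (x - y) ^+ 2.
Proof.
move=> Xx Xy l01; have Xz := convex_set_combine X_convex Xx Xy l01.
have := h_sc Xx Xy l01.
rewrite -(fineK (h_fin Xz)) -(fineK (h_fin Xx)) -(fineK (h_fin Xy)).
by rewrite -!EFinM -EFinD -lee_fin.
Qed.

Lemma eps_argmin_growth A e w y l : eps_argmin X (F A) e w -> X y -> 0 <= l <= 1 ->
  l * (1 - l) / (2 * eta) * nrm (y - w) ^+ 2 - e <= l * (F A y - F A w).
Proof.
move=> [Xw wmin] Xy l01.
have Fz : F A (l *: y + (1 - l) *: w) <=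
    l * F A y + (1 - l) * F A w - l * (1 - l) / (2 * eta) * nrm (y - w) ^+ 2.
  have := fine_strongly_convex Xy Xw l01.
  have ieta_gt0 : 0 < eta^-1 by rewrite invr_gt0.
  rewrite -(ler_pM2r ieta_gt0) => hz.
  rewrite /dda_obj dotDr !dotZr; apply: le_trans (lerD (lexx _) hz) _.
  rewrite le_eqVlt invfM; apply/orP; left; apply/eqP.
  by field; rewrite gt_eqF.
by have := wmin _ (convex_set_combine X_convex Xy Xw l01); lra.
Qed.

Lemma eps_argmin_stable A A' e d K w w' :
  eps_argmin X (F A) e w -> eps_argmin X (F A') e w' ->
  0 <= K -> (forall v, dot (A' - A) v <= K * nrm v) ->
  0 < d -> 8 * eta * e <= d ^+ 2 ->
  nrm (w - w') <= eta * K + d.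
Proof.
move=> wmin w'min K_ge0 AK d_gt0 ed.
apply: (@le_of_quadratic_growth _ _ (2 * eta * e)) => //.
- by rewrite mulr_ge0 // ltW.
- lra.
- exact: nrm_ge0.
move=> l l01; set D := nrm (w - w').
have g1 := eps_argmin_growth wmin w'min.1 l01; rewrite (nrmB nrm_norm) -/D in g1.
have g2 := eps_argmin_growth w'min wmin.1 l01.
have cross : F A w' - F A w + (F A' w - F A' w') = dot (A' - A) (w - w').
  by rewrite /dda_obj dotBl !dotBr; ring.
have lK : l * dot (A' - A) (w - w') <= l * (K * D).
  by apply: ler_wpM2l; [case/andP: l01 | exact: AK].
rewrite -cross in lK.
have qE : l * (1 - l) * D ^+ 2 = 2 * eta * (l * (1 - l) / (2 * eta) * D ^+ 2).
  by field; rewrite gt_eqF.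
rewrite qE; set q := _ * D ^+ 2 in g1 g2 *.
have : eta * (2 * q - 2 * e) <= eta * (l * (K * D)).
  by apply: ler_wpM2l; [exact: ltW | lra].
lra.
Qed.

Lemma eps_argmin_exists A0 A K e x0 :
  eps_argmin X (F A0) 0 x0 -> 0 <= K -> (forall v, dot (A - A0) v <= K * nrm v) ->
  0 < e -> exists y, eps_argmin X (F A) e y.
Proof.
move=> x0min K_ge0 AK e_gt0.
set c := F A0 x0 + dot (A - A0) x0 - eta * K ^+ 2.
have F_ge z : X z -> c <= F A z.
  move=> Xz; have half : 0 <= (1 / 2 : R) <= 1 by apply/andP; split; lra.
  have growth := eps_argmin_growth x0min Xz half.
  set D := nrm (z - x0) in growth.
  have shift : F A z = F A0 z + dot (A - A0) x0 - dot (A - A0) (x0 - z).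
    by rewrite /dda_obj !dotBl !dotBr; ring.
  have := AK (x0 - z); rewrite (nrmB nrm_norm) -/D => AKD.
  have sq : 0 <= (D - 2 * eta * K) ^+ 2 / (4 * eta).
    by rewrite divr_ge0 ?sqr_ge0 // mulr_ge0 // ltW.
  have sqE : (D - 2 * eta * K) ^+ 2 / (4 * eta) =
      2 * (1 / 2 * (1 - 1 / 2) / (2 * eta) * D ^+ 2 - 0) - K * D + eta * K ^+ 2.
    by field; rewrite gt_eqF.
  rewrite sqE in sq.
  by rewrite shift /c; lra.
set S := [set F A z | z in X].
have S_inf : has_inf S.
  split; first by exists (F A x0), x0; case: x0min.
  by exists c => _ [z Xz <-]; exact: F_ge.
have [_ [y Xy <-] yS] := inf_adherent e_gt0 S_inf.
exists y; split=> // z Xz.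
have : inf S <= F A z by apply: (ge_inf S_inf.2); exists z.
lra.
Qed.

End RegularizedObjective.

Lemma be_the_leader (R : realType) (n : nat) (X : set 'rV[R]_n)
    (h : 'rV[R]_n -> \bar R) (eta : R) (ell y : nat -> 'rV[R]_n) (T : nat) (e : R)
    (p : 'rV[R]_n) :
  (forall t, (1 <= t <= T.+1)%N ->
     eps_argmin X (dda_obj h eta (\sum_(1 <= s < t) ell s)) e (y t)) ->
  X p ->
  \sum_(1 <= t < T.+1) dot (ell t) (y t.+1) - \sum_(1 <= t < T.+1) dot (ell t) p <=
  (fine (h p) - fine (h (y 1%N))) / eta + T.+1%:R * e.
Proof.
move=> ymin Xp.
set u := fun t => dda_obj h eta (\sum_(1 <= s < t) ell s) (y t).
have step t : (1 <= t < T.+1)%N -> dot (ell t) (y t.+1) - e <= u t.+1 - u t.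
  move=> tT; have [|_ yt_min] := ymin t; first lia.
  have [|Xy1 _] := ymin t.+1; first lia.
  have := yt_min _ Xy1.
  by rewrite /u /dda_obj big_nat_recr /= ?dotDl; [lra | lia].
have := ler_sum_nat step; rewrite (@telescope_sumr _ 1 T.+1 u) //.
rewrite sumrB sumr_const_nat subn1 /=.
have [|_ /(_ p Xp)] := ymin T.+1; first lia.
rewrite /u /dda_obj (big_geq (leqnn 1)) dot0l add0r !dot_suml mulrBl mulrSr -mulr_natl.
lra.
Qed.

Definition round_grad {R : realType} {n : nat} (M : nat -> nat)
    (g : nat -> nat -> 'rV[R]_n) (t : nat) : 'rV[R]_n :=
  \sum_(1 <= j < (M t).+1) g t j.

Definition full_feedback {R : realType} {n : nat} (M : nat -> nat)
    (g : nat -> nat -> 'rV[R]_n) (u : nat) : 'rV[R]_n :=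
  \sum_(1 <= s < u) round_grad M g s.

Section DelayedFeedback.
Variables (R : realType) (n : nat) (nrm : 'rV[R]_n -> R) (G : R).
Variables (T tau : nat) (M : nat -> nat) (g : nat -> nat -> 'rV[R]_n).
Variable S : nat -> nat -> pred (nat * nat).
Hypothesis G_ge0 : 0 <= G.
Hypothesis grad_le : forall s j v, (1 <= s <= T)%N -> (1 <= j <= M s)%N ->
  `|dot (g s j) v| <= G * nrm v.
Hypothesis S_delay : forall t i s j, (1 <= t <= T)%N -> (1 <= i <= M t)%N ->
  (1 <= s)%N -> (s + tau + 1 <= t)%N -> (1 <= j <= M s)%N -> S t i (j, s).

Lemma cum_feedbackE t i : cum_feedback M g S t i =
  \sum_(1 <= s < t) \sum_(1 <= j < (M s).+1) ((S t i (j, s))%:R : R) *: g s j.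
Proof.
apply: eq_bigr => s _; rewrite big_mkcond; apply: eq_bigr => j _.
by case: (S t i (j, s)); rewrite ?scale1r ?scale0r.
Qed.

Lemma dot_weighted_feedback_le u (c : nat -> nat -> R) v : (u <= T.+1)%N ->
  (forall s j, (1 <= s < u)%N -> (1 <= j <= M s)%N -> `|c s j| <= 1) ->
  (forall s j, (1 <= s < u)%N -> (1 <= j <= M s)%N -> (s + tau + 1 <= u)%N ->
     c s j = 0) ->
  dot (\sum_(1 <= s < u) \sum_(1 <= j < (M s).+1) c s j *: g s j) v <=
  (delayed_mass M tau u)%:R * G * nrm v.
Proof.
move=> uT c_le1 c_old.
rewrite dot_suml /delayed_mass natr_sum !mulr_suml [X in _ <= X]big_mkcond /=.
apply: ler_sum_nat => s su; rewrite dot_suml; case: ifP => recent.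
- apply: le_trans (_ : \sum_(1 <= j < (M s).+1) G * nrm v <= _); last first.
    by rewrite sumr_const_nat subn1 -mulrA mulr_natl.
  apply: ler_sum_nat => j sj; rewrite dotZl; apply: le_trans (ler_norm _) _.
  rewrite normrM -[X in _ <= X]mul1r ler_pM ?c_le1 ?grad_le //; lia.
- rewrite big_nat big1 // => j sj.
  by rewrite c_old ?scale0r ?dot0l //; move/negbT: recent; lia.
Qed.

Lemma dot_feedback_agents_le t i i' v : (1 <= t <= T)%N ->
  (1 <= i <= M t)%N -> (1 <= i' <= M t)%N ->
  dot (cum_feedback M g S t i' - cum_feedback M g S t i) v <=
  (delayed_mass M tau t)%:R * G * nrm v.
Proof.
move=> tT iM i'M; rewrite !cum_feedbackE -sumrB.
under eq_bigr do rewrite -sumrB; under eq_bigr do under eq_bigr do rewrite -scalerBl.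
apply: dot_weighted_feedback_le; first lia.
  move=> s j _ _; case: (S t i' _); case: (S t i _);
  by rewrite ?subrr ?normr0 ?subr0 ?sub0r ?normrN ?normr1.
by move=> s j sT jM old; rewrite !S_delay ?subrr //; lia.
Qed.

Lemma dot_feedback_missing_le t i v : (1 <= t <= T)%N -> (1 <= i <= M t)%N ->
  dot (full_feedback M g t - cum_feedback M g S t i) v <=
  (delayed_mass M tau t)%:R * G * nrm v.
Proof.
move=> tT iM; rewrite /full_feedback /round_grad cum_feedbackE -sumrB.
under eq_bigr do rewrite -sumrB.
under eq_bigr do under eq_bigr do rewrite -[X in X - _]scale1r -scalerBl.
apply: dot_weighted_feedback_le; first lia.
  by move=> s j _ _; case: (S t i _); rewrite ?subrr ?normr0 ?subr0 ?normr1.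
by move=> s j sT jM old; rewrite S_delay ?subrr //; lia.
Qed.

Lemma dot_round_grad_le t v : (1 <= t <= T)%N ->
  dot (round_grad M g t) v <= (M t)%:R * G * nrm v.
Proof.
move=> tT; rewrite dot_suml.
apply: le_trans (_ : \sum_(1 <= j < (M t).+1) G * nrm v <= _); last first.
  by rewrite sumr_const_nat subn1 -mulrA mulr_natl.
apply: ler_sum_nat => j jM; apply: le_trans (ler_norm _) _; apply: grad_le => //; lia.
Qed.

Lemma dot_full_feedback_le u v : (u <= T.+1)%N ->
  dot (full_feedback M g u) v <= (\sum_(1 <= s < u) M s)%:R * G * nrm v.
Proof.
move=> uT; rewrite dot_suml natr_sum !mulr_suml.
apply: ler_sum_nat => s /andP[s_gt0 su]; apply: dot_round_grad_le.
by rewrite s_gt0 -ltnS (leq_trans su uT).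
Qed.

End DelayedFeedback.

Section Regret.
Variables (R : realType) (n : nat) (nrm : 'rV[R]_n -> R) (X : set 'rV[R]_n).
Variables (h : 'rV[R]_n -> \bar R) (eta G : R) (T tau : nat) (M : nat -> nat).
Variables (f : nat -> nat -> 'rV[R]_n -> R) (x g : nat -> nat -> 'rV[R]_n).
Variables (S : nat -> nat -> pred (nat * nat)) (jr : nat -> nat) (p : 'rV[R]_n).
Hypotheses (nrm_norm : is_norm nrm) (X_convex : convex_set (X : set (convex_lmodType _))).
Hypotheses (h_sc : strongly_convex_on nrm X h) (h_fin : forall y, X y -> h y \is a fin_num).
Hypotheses (eta_gt0 : 0 < eta) (G_ge0 : 0 <= G) (Xp : X p).
Hypothesis S_delay : forall t i s j, (1 <= t <= T)%N -> (1 <= i <= M t)%N ->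
  (1 <= s)%N -> (s + tau + 1 <= t)%N -> (1 <= j <= M s)%N -> S t i (j, s).
Hypothesis f_lip : forall t i, (1 <= t <= T)%N -> (1 <= i <= M t)%N ->
  lipschitz_wrt nrm G (f t i).
Hypothesis g_subgrad : forall t i, (1 <= t <= T)%N -> (1 <= i <= M t)%N ->
  subgrad (f t i) (x t i) (g t i).
Hypothesis jr_agent : forall t, (1 <= t <= T)%N -> (1 <= jr t <= M t)%N.
Hypothesis x_argmin : forall t i, (1 <= t <= T)%N -> (1 <= i <= M t)%N ->
  eps_argmin X (dda_obj h eta (cum_feedback M g S t i)) 0 (x t i).

Let grad_le s j v : (1 <= s <= T)%N -> (1 <= j <= M s)%N ->
  `|dot (g s j) v| <= G * nrm v.
Proof.
by move=> sT jM; exact: lipschitz_subgrad_dot_le nrm_norm (f_lip sT jM) (g_subgrad sT jM).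
Qed.

Section LeaderSequence.
Variables (d e : R) (y : nat -> 'rV[R]_n).
Hypotheses (d_gt0 : 0 < d) (e_ge0 : 0 <= e) (ed : 8 * eta * e <= d ^+ 2).
Hypothesis y_argmin : forall t, (1 <= t <= T.+1)%N ->
  eps_argmin X (dda_obj h eta (full_feedback M g t)) e (y t).

Let x_eps_argmin t i : (1 <= t <= T)%N -> (1 <= i <= M t)%N ->
  eps_argmin X (dda_obj h eta (cum_feedback M g S t i)) e (x t i).
Proof. by move=> tT iM; apply: eps_argminW e_ge0 (x_argmin tT iM). Qed.

Let stable := eps_argmin_stable nrm_norm X_convex h_sc h_fin eta_gt0.

Lemma step_regret_le t i : (1 <= t <= T)%N -> (1 <= i <= M t)%N ->
  f t i (x t (jr t)) - f t i p <=
  dot (g t i) (y t - p) + 2 * G * (eta * ((delayed_mass M tau t)%:R * G) + d).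
Proof.
move=> tT iM; have jM := jr_agent tT.
set B := eta * _ + d.
have K_ge0 : 0 <= (delayed_mass M tau t)%:R * G by rewrite mulr_ge0.
have xx : nrm (x t (jr t) - x t i) <= B.
  apply: stable (x_eps_argmin tT jM) (x_eps_argmin tT iM) K_ge0 _ d_gt0 ed.
  by move=> v; exact: (dot_feedback_agents_le G_ge0 grad_le S_delay v tT jM iM).
have xy : nrm (x t i - y t) <= B.
  apply: stable (x_eps_argmin tT iM) (y_argmin _) K_ge0 _ d_gt0 ed; first lia.
  by move=> v; exact: (dot_feedback_missing_le G_ge0 grad_le S_delay v tT iM).
have := f_lip tT iM (x t (jr t)) (x t i); move=> /ler_normlP[_ lip].
have := grad_le (x t i - y t) tT iM; move=> /ler_normlP[_ gxy].
have := g_subgrad tT iM p; rewrite !dotBr in gxy * => sg.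
have : G * nrm (x t (jr t) - x t i) <= G * B by rewrite ler_wpM2l.
have : G * nrm (x t i - y t) <= G * B by rewrite ler_wpM2l.
lra.
Qed.

Lemma round_regret_le t : (1 <= t <= T)%N ->
  \sum_(1 <= i < (M t).+1) (f t i (x t (jr t)) - f t i p) <=
  dot (round_grad M g t) (y t.+1 - p) +
  (eta * G ^+ 2 * ((M t)%:R ^+ 2 + 2 * ((M t)%:R * (delayed_mass M tau t)%:R)) +
   3 * G * d * (M t)%:R).
Proof.
move=> tT; set m := (M t)%:R; set P := (delayed_mass M tau t)%:R.
apply: le_trans (_ : \sum_(1 <= i < (M t).+1)
    (dot (g t i) (y t - p) + 2 * G * (eta * (P * G) + d)) <= _).
  by apply: ler_sum_nat => i iM; apply: step_regret_le; lia.
rewrite big_split /= -dot_suml sumr_const_nat subn1 -mulr_natr -/m.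
have yy : nrm (y t - y t.+1) <= eta * (m * G) + d.
  apply: stable (y_argmin _) (y_argmin _) _ _ d_gt0 ed; [lia | lia | by rewrite mulr_ge0 |].
  move=> v; rewrite /full_feedback big_nat_recr /=; last lia.
  by rewrite addrAC subrr add0r; exact: (dot_round_grad_le grad_le v tT).
have := dot_round_grad_le grad_le (y t - y t.+1) tT; rewrite -/m !dotBr => ell_le.
have : m * G * nrm (y t - y t.+1) <= m * G * (eta * (m * G) + d).
  by rewrite ler_wpM2l // mulr_ge0.
lra.
Qed.

Lemma regret_le_slack :
  \sum_(1 <= t < T.+1) \sum_(1 <= i < (M t).+1) f t i (x t (jr t)) -
  \sum_(1 <= t < T.+1) \sum_(1 <= i < (M t).+1) f t i p <=
  (fine (h p) - fine (h (y 1%N))) / eta + T.+1%:R * e +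
  eta * G ^+ 2 * ((2 * tau + 1)%N%:R * \sum_(1 <= t < T.+1) (M t)%:R ^+ 2) +
  3 * G * d * \sum_(1 <= t < T.+1) (M t)%:R.
Proof.
have mass : \sum_(1 <= t < T.+1) (M t)%:R * (delayed_mass M tau t)%:R <=
    tau%:R * \sum_(1 <= t < T.+1) (M t)%:R ^+ 2 :> R.
  have := sum_mul_delayed_mass_le M tau T; rewrite -(ler_nat R) natrM !natr_sum.
  by under eq_bigr do rewrite natrM; under [in X in _ <= X]eq_bigr do rewrite natrX.
have leader := be_the_leader y_argmin Xp.
rewrite -sumrB; under eq_bigr do rewrite -sumrB.
have round_le : forall t, (1 <= t < T.+1)%N -> _ := fun t tT => round_regret_le tT.
apply: le_trans (ler_sum_nat round_le) _.
under eq_bigr do rewrite dotBr.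
rewrite big_split /= sumrB big_split /= -!mulr_sumr big_split /= -mulr_sumr.
rewrite natrD natrM mulr1n.
have : eta * G ^+ 2 * \sum_(1 <= t < T.+1) (M t)%:R * (delayed_mass M tau t)%:R <=
    eta * G ^+ 2 * (tau%:R * \sum_(1 <= t < T.+1) (M t)%:R ^+ 2).
  by rewrite ler_wpM2l // mulr_ge0 ?sqr_ge0 // ltW.
lra.
Qed.

End LeaderSequence.

Hypothesis h_ge0 : forall y, (0 <= h y)%E.
Hypothesis M_gt0 : forall t, (1 <= t <= T)%N -> (0 < M t)%N.
Hypothesis T_gt0 : (0 < T)%N.

Lemma dda_regret_le_slack d : 0 < d ->
  \sum_(1 <= t < T.+1) \sum_(1 <= i < (M t).+1) f t i (x t (jr t)) -
  \sum_(1 <= t < T.+1) \sum_(1 <= i < (M t).+1) f t i p <=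
  fine (h p) / eta +
  eta * G ^+ 2 * ((2 * tau + 1)%N%:R * \sum_(1 <= t < T.+1) (M t)%:R ^+ 2) +
  (T.+1%:R / (8 * eta) * d ^+ 2 + 3 * G * (\sum_(1 <= t < T.+1) (M t)%:R) * d).
Proof.
move=> d_gt0; set e := d ^+ 2 / (8 * eta).
have e_gt0 : 0 < e by rewrite divr_gt0 ?exprn_gt0 // mulr_gt0.
have ed : 8 * eta * e <= d ^+ 2 by rewrite /e mulrC divfK // gt_eqF // mulr_gt0.
(* No feedback exists at time 1, so [x 1 1] minimizes [h] alone. *)
have x11 : eps_argmin X (dda_obj h eta 0) 0 (x 1%N 1%N).
  have T1 : (1 <= 1 <= T)%N by lia.
  have M1 : (1 <= 1 <= M 1)%N by rewrite /= M_gt0.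
  by have := x_argmin T1 M1; rewrite /cum_feedback (big_geq (leqnn 1)).
have y_ex t : exists yt, (1 <= t <= T.+1)%N ->
    eps_argmin X (dda_obj h eta (full_feedback M g t)) e yt.
  have [tT|_] := boolP (1 <= t <= T.+1)%N; last by exists 0.
  have K_ge0 : 0 <= (\sum_(1 <= s < t) M s)%:R * G by rewrite mulr_ge0.
  have AK v : dot (full_feedback M g t - 0) v <= (\sum_(1 <= s < t) M s)%:R * G * nrm v.
    by rewrite subr0; apply: (dot_full_feedback_le grad_le); lia.
  have [yt yt_min] :=
    eps_argmin_exists nrm_norm X_convex h_sc h_fin eta_gt0 x11 K_ge0 AK e_gt0.
  by exists yt.
have [y y_argmin] := choice y_ex.
have := regret_le_slack d_gt0 (ltW e_gt0) ed y_argmin.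
have : 0 <= fine (h (y 1%N)) / eta by rewrite divr_ge0 ?fine_ge0 // ltW.
have -> : T.+1%:R * e = T.+1%:R / (8 * eta) * d ^+ 2.
  by rewrite /e; ring.
rewrite mulrBl (mulrAC _ d); lra.
Qed.

End Regret.

Lemma Mbar_sqr (R : realType) (M : nat -> nat) (T : nat) : (0 < T)%N ->
  Mbar M T ^+ 2 * T%:R = \sum_(1 <= t < T.+1) (M t)%:R ^+ 2 :> R.
Proof.
move=> T_gt0; have S_ge0 : 0 <= \sum_(1 <= t < T.+1) ((M t)%:R : R) ^+ 2.
  by apply: sumr_ge0 => t _; exact: sqr_ge0.
by rewrite /Mbar sqr_sqrtr ?mulr_ge0 ?invr_ge0 // mulrAC mulVf ?mul1r // pnatr_eq0 -lt0n.
Qed.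

Lemma Mbar_gt0 (R : realType) (M : nat -> nat) (T : nat) : (0 < T)%N ->
  (forall t, (1 <= t <= T)%N -> (0 < M t)%N) -> 0 < Mbar M T :> R.
Proof.
move=> T_gt0 M_gt0; rewrite sqrtr_gt0 mulr_gt0 ?invr_gt0 ?ltr0n // big_ltn ?ltnS //.
have : 0 <= \sum_(2 <= t < T.+1) ((M t)%:R : R) ^+ 2.
  by apply: sumr_ge0 => t _; exact: sqr_ge0.
have : 0 < ((M 1%N)%:R : R) ^+ 2 by rewrite exprn_gt0 // ltr0n M_gt0 //; lia.
lra.
Qed.

Lemma balanced_stepsize (R : realType) (r G Mb Q a Tr S2 : R) :
  0 < r -> 0 < G -> 0 < Mb -> 0 < Q -> Q ^+ 2 = a * Tr -> Mb ^+ 2 * Tr = S2 ->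
  r ^+ 2 / (r / (G * Mb * Q)) + r / (G * Mb * Q) * G ^+ 2 * (a * S2) =
  2 * r * G * Mb * Q.
Proof.
move=> r_gt0 G_gt0 Mb_gt0 Q_gt0 QE S2E.
have -> : a * S2 = Mb ^+ 2 * Q ^+ 2 by rewrite -S2E QE; ring.
field.
by rewrite !gt_eqF ?mulr_gt0.
Qed.

Lemma le_of_vanishing_slack (R : realType) (a b C1 C2 : R) :
  0 <= C1 -> 0 <= C2 -> (forall d, 0 < d -> a <= b + (C1 * d ^+ 2 + C2 * d)) ->
  a <= b.
Proof.
move=> C1_ge0 C2_ge0 slack; apply/ler_addgt0Pr => e e_gt0.
set d := Num.min 1 (e / (C1 + C2 + 1)).
have d_gt0 : 0 < d by rewrite lt_min ltr01 divr_gt0 //; lra.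
have d_le1 : d <= 1 by rewrite ge_min lexx.
have de : d * (C1 + C2 + 1) <= e.
  by rewrite -ler_pdivlMr ?ge_min ?lexx ?orbT //; lra.
have := slack d d_gt0.
have : C1 * d ^+ 2 <= C1 * d by rewrite ler_wpM2l // expr2 ler_piMl // ltW.
have : 0 <= C1 * d by rewrite mulr_ge0 // ltW.
have : 0 <= C2 * d by rewrite mulr_ge0 // ltW.
nra.
Qed.

(* Indices: time t in 1..T, agent i in 1..M t.  x t i = x^i_t,
   f t i = f^i_t, g t i = g^i_t, Sfb t i = S^i_t, jr t = j_t. *)
Theorem theorem3 (R : realType) (n : nat) (nrm : 'rV[R]_n -> R)
  (X : set 'rV[R]_n) (h : 'rV[R]_n -> \bar R)
  (T tau : nat) (M : nat -> nat)
  (f : nat -> nat -> 'rV[R]_n -> R) (x g : nat -> nat -> 'rV[R]_n)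
  (Sfb : nat -> nat -> pred (nat * nat)) (jr : nat -> nat)
  (G r : R) (p : 'rV[R]_n) :
  is_norm nrm ->
  closed X -> convex_set (X : set (convex_lmodType _)) ->
  lower_semicontinuous h ->
  strongly_convex_on nrm X h ->
  (forall y, X y -> h y \is a fin_num) ->
  subdiff_cont_selection h ->
  (forall y, (0 <= h y)%E) ->
  (forall t, (1 <= t <= T)%N -> (1 <= M t)%N) ->
  (* feedback sets consist of past (agent, time) indices *)
  (forall t i j s, (1 <= t <= T)%N -> (1 <= i <= M t)%N -> Sfb t i (j, s) ->
     (1 <= s <= t - 1)%N && (1 <= j <= M s)%N) ->
  (* maximum delay bounded by tau *)
  (forall t i s j, (1 <= t <= T)%N -> (1 <= i <= M t)%N ->
     (1 <= s)%N -> (s + tau + 1 <= t)%N -> (1 <= j <= M s)%N -> Sfb t i (j, s)) ->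
  (* convex, G-Lipschitz losses and subgradients *)
  0 < G ->
  (forall t i, (1 <= t <= T)%N -> (1 <= i <= M t)%N ->
     convex_fun (f t i) /\ lipschitz_wrt nrm G (f t i)) ->
  (forall t i, (1 <= t <= T)%N -> (1 <= i <= M t)%N ->
     subgrad (f t i) (x t i) (g t i)) ->
  (* comparator *)
  0 < r -> X p -> (h p <= (r ^+ 2)%:E)%E ->
  (* D-DDA with constant stepsize eta *)
  let eta := r / (G * Mbar M T * Num.sqrt (((2 * tau + 1)%N)%:R * T%:R)) in
  (forall t i, (1 <= t <= T)%N -> (1 <= i <= M t)%N ->
     X (x t i) /\
     forall y, X y ->
       dot (cum_feedback M g Sfb t i) (x t i) + fine (h (x t i)) / eta <=
       dot (cum_feedback M g Sfb t i) y + fine (h y) / eta) ->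
  (* reference agents *)
  (forall t, (1 <= t <= T)%N -> (1 <= jr t <= M t)%N) ->
  \sum_(1 <= t < T.+1) \sum_(1 <= i < (M t).+1) f t i (x t (jr t))
    - \sum_(1 <= t < T.+1) \sum_(1 <= i < (M t).+1) f t i p
  <= 2 * r * G * Mbar M T * Num.sqrt (((2 * tau + 1)%N)%:R * T%:R).
Proof.
(* Closedness, semicontinuity and the continuous selection only serve to make exact
   minimizers exist, which the argument never needs; convexity of the losses is
   implied by the subgradient inequality, and [cum_feedback] only reads past rounds. *)
move=> nrm_norm _ X_convex _ h_sc h_fin _ h_ge0 M_gt0 _ S_delay G_gt0 f_cvx_lip g_subgrad
  r_gt0 Xp hp eta x_min jr_agent.
have [->|T_gt0] := posnP T; first by rewrite !big_geq // subrr mulr0 sqrtr0 mulr0.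
set Q := Num.sqrt _; have Q_gt0 : 0 < Q by rewrite sqrtr_gt0 mulr_gt0 ?ltr0n ?addn1.
have Mbar_pos : 0 < Mbar M T :> R := Mbar_gt0 R T_gt0 M_gt0.
have eta_gt0 : 0 < eta by rewrite divr_gt0 // !mulr_gt0.
have x_argmin t i : (1 <= t <= T)%N -> (1 <= i <= M t)%N ->
    eps_argmin X (dda_obj h eta (cum_feedback M g Sfb t i)) 0 (x t i).
  move=> tT iM; have [Xx xmin] := x_min t i tT iM.
  by split=> // z Xz; rewrite addr0; exact: xmin.
have f_lip t i : (1 <= t <= T)%N -> (1 <= i <= M t)%N -> lipschitz_wrt nrm G (f t i).
  by move=> tT iM; case: (f_cvx_lip t i tT iM).
have slack := dda_regret_le_slack nrm_norm X_convex h_sc h_fin eta_gt0 (ltW G_gt0) Xp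
  S_delay f_lip g_subgrad jr_agent x_argmin h_ge0 M_gt0 T_gt0.
apply: le_trans (le_of_vanishing_slack _ _ slack) _.
- by rewrite divr_ge0 // mulr_ge0 // ltW.
- by apply: mulr_ge0; [rewrite mulr_ge0 // ltW | exact: sumr_ge0].
have hp_le : fine (h p) <= r ^+ 2 by move: hp; rewrite -(fineK (h_fin p Xp)) lee_fin.
have Q_sqr : Q ^+ 2 = (2 * tau + 1)%N%:R * T%:R by rewrite sqr_sqrtr // mulr_ge0.
rewrite -(balanced_stepsize r_gt0 G_gt0 Mbar_pos Q_gt0 Q_sqr (Mbar_sqr R M T_gt0)) -/eta.
by rewrite lerD2r ler_pM2r ?invr_gt0.
Qed.
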